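(* Let $h>0$ and let $\alpha:\mathbb R\to\mathbb R^2$ be a regular curve parametrized by arc length whose signed curvature satisfies $k(s)=K(\tau(s),\mu(s))$ for all $s$, where $\tau=\langle\alpha,\alpha'\rangle$ and $\mu=\langle\alpha,J\alpha'\rangle$. Then $\alpha(s)\neq0$ for $|s|$ sufficiently large, and a continuous polar angle $\omega$ of $\alpha$ (i.e. $\alpha=|\alpha|(\cos\omega,\sin\omega)$), defined on each of the two unbounded intervals where $|s|$ is large, satisfies $\lim_{s\to+\infty}\omega(s)=+\infty$ and $\lim_{s\to-\infty}\omega(s)=+\infty$.
   Context: Fix $h>0$. For $(\tau,\mu)\in\mathbb R^2$ put $r^2=\tau^2+\mu^2$ and define $K:\mathbb R^2\to\mathbb R$ by $$K(\tau,\mu)=\frac{2\big(\tau^2+h^2(1+\mu^2)\big)\tau+(h^2-1)(1+\mu^2)\mu}{(1+r^2)(h^2+r^2)}.$$ $J(x_1,x_2)=(-x_2,x_1)$ on $\mathbb R^2$, $\langle\cdot,\cdot\rangle$ is the Euclidean inner product, and the signed curvature of an arc-length curve $\alpha$ is $k=\langle\alpha'',J\alpha'\rangle$. *)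

From Stdlib Require Import Reals.
From Coquelicot Require Import Coquelicot.
Open Scope R_scope.

Definition Kfun (h tau mu : R) : R :=
  let r2 := tau ^ 2 + mu ^ 2 in
  (2 * (tau ^ 2 + h ^ 2 * (1 + mu ^ 2)) * tau + (h ^ 2 - 1) * (1 + mu ^ 2) * mu)
  / ((1 + r2) * (h ^ 2 + r2)).

(* A plane curve alpha = (a1, a2) : R -> R^2 (two coordinate functions). *)
(* Euclidean inner product and J(x1,x2) = (-x2,x1). *)
Definition dot (x1 x2 y1 y2 : R) : R := x1 * y1 + x2 * y2.

Definition tau_of (a1 a2 : R -> R) (s : R) : R :=
  dot (a1 s) (a2 s) (Derive a1 s) (Derive a2 s).
Definition mu_of (a1 a2 : R -> R) (s : R) : R :=
  dot (a1 s) (a2 s) (- Derive a2 s) (Derive a1 s).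

Definition curv (a1 a2 : R -> R) (s : R) : R :=
  dot (Derive (Derive a1) s) (Derive (Derive a2) s) (- Derive a2 s) (Derive a1 s).

Definition arclength_curve (a1 a2 : R -> R) : Prop :=
  forall s, ex_derive a1 s /\ ex_derive a2 s /\
            ex_derive (Derive a1) s /\ ex_derive (Derive a2) s /\
            (Derive a1 s) ^ 2 + (Derive a2 s) ^ 2 = 1.

Definition polar_angle_at (a1 a2 omega : R -> R) (s : R) : Prop :=
  a1 s = sqrt (a1 s ^ 2 + a2 s ^ 2) * cos (omega s) /\
  a2 s = sqrt (a1 s ^ 2 + a2 s ^ 2) * sin (omega s).

From Stdlib Require Import Reals Lra Psatz Classical.
From Coquelicot Require Import Coquelicot.
Open Scope R_scope.

(* Along an arc-length curve, tau = <alpha, alpha'> and mu = <alpha, J alpha'> satisfy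
   tau' = 1 + k mu and mu' = - k tau, so the curvature condition makes (tau, mu) an
   autonomous planar flow.  A Lyapunov function (tau, or tau - 2 mu when h^2 > 1/4) grows
   linearly, which pushes the flow far from the origin.  There the flow crosses the edges of
   the cone -3 tau <= mu <= - tau only inwards, and outside the cone one of the ratios
   - mu / tau, - tau / mu would grow logarithmically without bound, so the flow enters the
   cone and stays in it.  In the cone |alpha|^2 = tau^2 + mu^2 > 0 and the polar angle has
   speed - mu / |alpha|^2 >= 1 / (10 tau), with tau growing at most linearly, so the angle
   grows at least logarithmically.  Reversing the parameter negates tau, mu and k, and K is
   odd, so the limit s -> -oo is the limit s -> +oo for the reflected curve. *)

Lemma continuity_pt_of_ex_derive (f : R -> R) (x : R) :
  ex_derive f x -> continuity_pt f x.
Proof.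
  intros Hf. apply continuity_pt_filterlim.
  exact (ex_derive_continuous (K:=R_AbsRing) (V:=R_NormedModule) f x Hf).
Qed.

Lemma IVT_interv_between (f : R -> R) (x y v : R) :
  x <= y -> (forall z, x <= z <= y -> continuity_pt f z) ->
  Rmin (f x) (f y) <= v <= Rmax (f x) (f y) -> exists z, x <= z <= y /\ f z = v.
Proof.
  intros Hxy Hc Hv.
  destruct (Req_dec (f x) v) as [Ex|Ex]; [exists x; split; [lra|exact Ex]|].
  destruct (Req_dec (f y) v) as [Ey|Ey]; [exists y; split; [lra|exact Ey]|].
  destruct (Rle_lt_or_eq_dec x y Hxy) as [Hlt|<-].
  2: { rewrite Rmin_left, Rmax_left in Hv by lra. exists x. split; lra. }
  assert (Hsign : f x < v < f y \/ f y < v < f x).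
  { revert Hv; unfold Rmin, Rmax; destruct (Rle_dec (f x) (f y)); lra. }
  destruct Hsign as [Hs|Hs].
  - destruct (Ranalysis5.IVT_interv (fun z => f z - v) x y) as [z [Hz Hfz]]; try lra.
    + intros a Ha. apply continuity_pt_minus;
        [now apply Hc | apply continuity_pt_const; now intros ? ?].
    + exists z; split; [exact Hz | lra].
  - destruct (Ranalysis5.IVT_interv (fun z => v - f z) x y) as [z [Hz Hfz]]; try lra.
    + intros a Ha. apply continuity_pt_minus;
        [apply continuity_pt_const; now intros ? ? | now apply Hc].
    + exists z; split; [exact Hz | lra].
Qed.

Lemma continuous_sign_constant (g : R -> R) (S : R) :
  (forall t, S <= t -> continuity_pt g t) -> (forall t, S <= t -> g t <> 0) ->
  (forall t, S <= t -> 0 < g t) \/ (forall t, S <= t -> g t < 0).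
Proof.
  intros Hc Hz.
  assert (Hkeep : forall t, S <= t -> 0 < g S * g t).
  { intros t Ht. destruct (Rlt_le_dec 0 (g S * g t)) as [|Hneg]; [assumption|].
    destruct (IVT_interv_between g S t 0) as [z [Hzr Hgz]]; [exact Ht | | |].
    - intros z Hzr. apply Hc. lra.
    - pose proof (Hz S (Rle_refl S)). pose proof (Hz t Ht).
      unfold Rmin, Rmax; destruct (Rle_dec (g S) (g t)); nra.
    - exfalso. apply (Hz z); [lra | exact Hgz]. }
  destruct (Rlt_le_dec 0 (g S)) as [HS|HS]; [left|right]; intros t Ht;
    specialize (Hkeep t Ht); pose proof (Hz S (Rle_refl S)); nra.
Qed.

Lemma nondecreasing_of_derive_nonneg (f df : R -> R) (a : R) :
  (forall x, a <= x -> is_derive f x (df x)) -> (forall x, a <= x -> 0 <= df x) ->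
  forall x y, a <= x -> x <= y -> f x <= f y.
Proof.
  intros Hf Hdf x y Hx Hxy.
  destruct (MVT_gen f x y df) as [c [Hc Hfc]]; rewrite ?Rmin_left, ?Rmax_right in * by lra.
  - intros z Hz. apply Hf. lra.
  - intros z Hz. apply continuity_pt_of_ex_derive. exists (df z). apply Hf. lra.
  - assert (0 <= df c * (y - x)) by (apply Rmult_le_pos; [apply Hdf|]; lra). lra.
Qed.

Lemma constant_of_derive_zero (f : R -> R) (a : R) :
  (forall x, a <= x -> is_derive f x 0) -> forall x, a <= x -> f x = f a.
Proof.
  intros Hf x Hx.
  assert (f a <= f x)
    by (apply (nondecreasing_of_derive_nonneg f (fun _ => 0) a); auto; intros; lra).
  assert (- f a <= - f x).
  { apply (nondecreasing_of_derive_nonneg (fun x => - f x) (fun _ => - 0) a); try (intros; lra).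
    intros y Hy. apply (is_derive_opp f), Hf, Hy. }
  lra.
Qed.

Lemma eventually_ge_of_derive_ge (f df : R -> R) (delta : R) :
  0 < delta -> (forall s, is_derive f s (df s)) -> (forall s, delta <= df s) ->
  forall M, exists S, 0 <= S /\ forall s, S <= s -> M <= f s.
Proof.
  intros Hd Hf Hdf M.
  assert (Hlin : forall s, 0 <= s -> f 0 + delta * s <= f s).
  { intros s Hs.
    enough (f 0 - delta * 0 <= f s - delta * s) by lra.
    apply (nondecreasing_of_derive_nonneg (fun s => f s - delta * s) (fun s => df s - delta) 0);
      try lra.
    - intros x _. apply (is_derive_minus f (fun s => delta * s)); [apply Hf|].
      evar_last; [apply is_derive_scal, is_derive_id|]. simpl; unfold mult, one; simpl; ring.
    - intros x _. specialize (Hdf x). lra. }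
  exists (Rmax 0 ((M - f 0) / delta)). split; [apply Rmax_l|].
  intros s Hs.
  assert (Hs0 : 0 <= s) by (eapply Rle_trans; [apply Rmax_l | exact Hs]).
  assert (HsM : (M - f 0) / delta <= s) by (eapply Rle_trans; [apply Rmax_r | exact Hs]).
  apply (Rmult_le_compat_l delta) in HsM; [|lra].
  replace (delta * ((M - f 0) / delta)) with (M - f 0) in HsM by (field; lra).
  specialize (Hlin s Hs0). lra.
Qed.

Lemma unbounded_of_derive_ge_inv_linear (f df : R -> R) (a c A B : R) :
  0 <= a -> 0 < c -> 0 < A -> 0 < B ->
  (forall t, a <= t -> is_derive f t (df t)) ->
  (forall t, a <= t -> c / (A + B * t) <= df t) ->
  forall M, exists t0, forall t, t0 <= t -> M < f t.
Proof.
  intros Ha Hc HA HB Hf Hdf M.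
  assert (Hpos : forall t, a <= t -> 0 < A + B * t) by (intros; nra).
  assert (Hln : forall t, a <= t -> f a + c / B * (ln (A + B * t) - ln (A + B * a)) <= f t).
  { intros t Ht.
    enough (f a - c / B * ln (A + B * a) <= f t - c / B * ln (A + B * t)) by lra.
    apply (nondecreasing_of_derive_nonneg (fun t => f t - c / B * ln (A + B * t))
             (fun t => df t - c / (A + B * t)) a); try lra.
    - intros x Hx. specialize (Hpos x Hx).
      apply (is_derive_minus f (fun t => c / B * ln (A + B * t))); [now apply Hf|].
      auto_derive; [lra | field; lra].
    - intros x Hx. specialize (Hdf x Hx). lra. }
  set (L := ln (A + B * a) + (M - f a) * B / c + 1).
  exists (Rmax a ((exp L - A) / B)). intros t Ht.
  assert (Hta : a <= t) by (eapply Rle_trans; [apply Rmax_l | exact Ht]).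
  assert (HtL : (exp L - A) / B <= t) by (eapply Rle_trans; [apply Rmax_r | exact Ht]).
  assert (HLt : L <= ln (A + B * t)).
  { rewrite <- (ln_exp L). apply ln_le; [apply exp_pos|].
    apply (Rmult_le_compat_l B) in HtL; [|lra].
    replace (B * ((exp L - A) / B)) with (exp L - A) in HtL by (field; lra). lra. }
  specialize (Hln t Hta).
  assert (Hgain : c / B * (L - ln (A + B * a)) <= c / B * (ln (A + B * t) - ln (A + B * a))).
  { apply Rmult_le_compat_l; [left; apply Rdiv_lt_0_compat|]; lra. }
  replace (c / B * (L - ln (A + B * a))) with (M - f a + c / B) in Hgain
    by (unfold L; field; lra).
  assert (0 < c / B) by (apply Rdiv_lt_0_compat; lra). lra.
Qed.

Lemma is_lim_p_infty_of_shift (f g : R -> R) (S c : R) :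
  (forall M, exists t0, forall t, t0 <= t -> M < f t) ->
  (forall t, S < t -> g t = f t + c) -> is_lim g p_infty p_infty.
Proof.
  intros Hf Hg P [M HM]. destruct (Hf (M - c)) as [t0 Ht0].
  exists (Rmax t0 S). intros x Hx. apply HM.
  assert (S < x) by (eapply Rle_lt_trans; [apply Rmax_r | exact Hx]).
  assert (t0 <= x) by (left; eapply Rle_lt_trans; [apply Rmax_l | exact Hx]).
  rewrite Hg by assumption. specialize (Ht0 x ltac:(assumption)). lra.
Qed.

Lemma continuity_pt_locally_pos (g : R -> R) (m : R) :
  continuity_pt g m -> 0 < g m -> exists eps, 0 < eps /\ forall t, Rabs (t - m) < eps -> 0 < g t.
Proof.
  intros Hc Hm.
  apply continuity_pt_filterlim in Hc.
  destruct (Hc (fun y => 0 < y) (open_gt 0 (g m) Hm)) as [eps Heps].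
  exists eps. split; [apply cond_pos|]. intros t Ht. now apply Heps.
Qed.

Lemma derive_neg_at_zero_right (g : R -> R) (m l : R) :
  is_derive g m l -> g m = 0 -> l < 0 -> forall q, m < q -> exists t, m < t <= q /\ g t < 0.
Proof.
  intros Hg Hm Hl q Hq.
  apply is_derive_Reals in Hg.
  destruct (Hg (- l / 2)) as [del Hdel]; [lra|].
  pose proof (cond_pos del) as Hdel0.
  set (e := Rmin (del / 2) (q - m)).
  assert (He : 0 < e) by (apply Rmin_pos; lra).
  assert (Heq : e <= q - m) by apply Rmin_r.
  assert (Hed : e < del) by (eapply Rle_lt_trans; [apply Rmin_l | lra]).
  specialize (Hdel e ltac:(lra) ltac:(rewrite Rabs_right; lra)).
  rewrite Hm, Rminus_0_r in Hdel. apply Rabs_def2 in Hdel.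
  exists (m + e). split; [lra|].
  replace (g (m + e)) with (g (m + e) / e * e) by (field; lra). nra.
Qed.

Lemma nonpos_of_derive_neg_at_zeros (g : R -> R) (s3 : R) :
  (forall t, ex_derive g t) -> g s3 <= 0 ->
  (forall t, s3 <= t -> g t = 0 -> Derive g t < 0) ->
  forall s, s3 <= s -> g s <= 0.
Proof.
  intros Hd Hs3 Hz s Hs.
  destruct (Rle_lt_dec (g s) 0) as [|Hgs]; [assumption|exfalso].
  assert (Hc : forall t, continuity_pt g t) by (intro t; now apply continuity_pt_of_ex_derive).
  (* [m] is the last point of [s3, s] where [g] is nonpositive. *)
  set (E := fun t => s3 <= t <= s /\ g t <= 0).
  destruct (completeness E) as [m [Hub Hlub]].
  { exists s. intros t [Ht _]. lra. }
  { exists s3. split; [lra | exact Hs3]. }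
  assert (Hm3 : s3 <= m) by (apply Hub; split; [lra | exact Hs3]).
  assert (Hms : m <= s) by (apply Hlub; intros t [Ht _]; lra).
  assert (Hgm : g m <= 0).
  { destruct (Rle_lt_dec (g m) 0) as [|Hgm]; [assumption|exfalso].
    destruct (continuity_pt_locally_pos g m (Hc m) Hgm) as [eps [Heps Hnear]].
    enough (m <= m - eps / 2) by lra.
    apply Hlub. intros t [Ht Hgt].
    destruct (Rle_lt_dec t (m - eps / 2)) as [|Hlt]; [assumption|exfalso].
    assert (t <= m) by (apply Hub; split; assumption).
    assert (0 < g t) by (apply Hnear; rewrite Rabs_left1; lra). lra. }
  assert (Hms' : m < s) by (destruct (Req_dec m s); [subst; lra | lra]).
  assert (Hgm0 : g m = 0).
  { destruct (Req_dec (g m) 0) as [|Hne]; [assumption|exfalso].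
    destruct (IVT_interv_between g m s 0) as [z [Hz1 Hz2]]; [lra | intros; apply Hc | |].
    - rewrite Rmin_left, Rmax_right; lra.
    - assert (z <= m) by (apply Hub; split; lra). assert (z = m) by lra. subst. lra. }
  destruct (derive_neg_at_zero_right g m (Derive g m) (Derive_correct _ _ (Hd m)) Hgm0
              (Hz m Hm3 Hgm0) s Hms') as [t [Ht Hgt]].
  assert (t <= m) by (apply Hub; split; lra). lra.
Qed.

Lemma cos_lt_1 (e : R) : 0 < e <= 1 -> cos e < 1.
Proof.
  intros He. replace e with (2 * (e / 2)) by field. rewrite cos_2a_sin.
  assert (0 < sin (e / 2)) by (apply sin_gt_0; pose proof PI2_1; lra). nra.
Qed.

Lemma constant_of_cos_eq_1 (d : R -> R) (S : R) :
  (forall t, S < t -> continuity_pt d t) -> (forall t, S < t -> cos (d t) = 1) ->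
  forall x y, S < x -> S < y -> d x = d y.
Proof.
  intros Hc Hcos.
  enough (Hle : forall x y, S < x -> x <= y -> d x = d y).
  { intros x y Hx Hy. destruct (Rle_lt_dec x y).
    - now apply Hle.
    - symmetry. apply Hle; lra. }
  intros x y Hx Hxy. destruct (Req_dec (d x) (d y)) as [|Hne]; [assumption|exfalso].
  assert (Hca : cos (d x) = 1) by now apply Hcos.
  assert (Hsa : sin (d x) = 0).
  { pose proof (sin2_cos2 (d x)) as H. rewrite Hca in H. unfold Rsqr in H. nra. }
  (* [d] takes a value [d x +- e] with [0 < e <= 1] between [x] and [y]; its cosine is [< 1]. *)
  set (e := Rmin 1 (Rabs (d y - d x))).
  assert (He : 0 < e <= 1).
  { split; [apply Rmin_pos; [lra | apply Rabs_pos_lt; lra] | apply Rmin_l]. }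
  assert (He2 : e <= Rabs (d y - d x)) by apply Rmin_r.
  assert (Hv : exists v, (v = d x + e \/ v = d x - e) /\
                         Rmin (d x) (d y) <= v <= Rmax (d x) (d y)).
  { destruct (Rle_lt_dec (d x) (d y)).
    - rewrite Rabs_right in He2 by lra. exists (d x + e).
      rewrite Rmin_left, Rmax_right by lra. split; [now left | lra].
    - rewrite Rabs_left in He2 by lra. exists (d x - e).
      rewrite Rmin_right, Rmax_left by lra. split; [now right | lra]. }
  destruct Hv as [v [Hv Hvr]].
  destruct (IVT_interv_between d x y v Hxy) as [z [Hz Hdz]]; [intros; apply Hc; lra | exact Hvr |].
  assert (Hcz : cos (d z) = 1) by (apply Hcos; lra).
  pose proof (cos_lt_1 e He).
  destruct Hv as [-> | ->]; rewrite Hdz in Hcz;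
    [rewrite cos_plus in Hcz | rewrite cos_minus in Hcz]; rewrite Hca, Hsa in Hcz; lra.
Qed.

Lemma polar_coordinates (x y : R) :
  exists w, x = sqrt (x ^ 2 + y ^ 2) * cos w /\ y = sqrt (x ^ 2 + y ^ 2) * sin w.
Proof.
  destruct (Req_dec (x ^ 2 + y ^ 2) 0) as [H0|H0].
  - exists 0. rewrite H0, sqrt_0. split; nra.
  - set (r := sqrt (x ^ 2 + y ^ 2)).
    assert (Hr : 0 < r) by (apply sqrt_lt_R0; nra).
    assert (Hr2 : r * r = x ^ 2 + y ^ 2) by (apply sqrt_sqrt; nra).
    set (u := x / r). set (v := y / r).
    assert (Huv : u ^ 2 + v ^ 2 = 1)
      by (unfold u, v; field_simplify; [rewrite <- Hr2; field|]; lra).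
    assert (Hu : -1 <= u <= 1) by (split; nra).
    assert (Hs : sqrt (1 - u²) = Rabs v).
    { rewrite <- sqrt_Rsqr_abs. f_equal. unfold Rsqr. lra. }
    assert (Hx : x = r * u) by (unfold u; field; lra).
    assert (Hy : y = r * v) by (unfold v; field; lra).
    destruct (Rle_lt_dec 0 v) as [Hv|Hv].
    + exists (acos u). rewrite cos_acos, sin_acos, Hs, Rabs_right by lra. now split.
    + exists (- acos u). rewrite cos_neg, sin_neg, cos_acos, sin_acos, Hs, Rabs_left by lra.
      split; [exact Hx | lra].
Qed.

Lemma Rabs_sub_le_of_derive_bounded (f df : R -> R) :
  (forall t, is_derive f t (df t)) -> (forall t, Rabs (df t) <= 1) ->
  forall x y, Rabs (f y - f x) <= Rabs (y - x).
Proof.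
  intros Hf Hdf x y.
  destruct (MVT_abs f df x y) as [c [Hc _]]; [intros; now apply is_derive_Reals|].
  rewrite Hc. pose proof (Rabs_pos (y - x)). specialize (Hdf c). nra.
Qed.

Lemma Rdiv_le_Rdiv_of_mul (a b p q : R) : 0 < b -> 0 < q -> a * q <= p * b -> a / b <= p / q.
Proof.
  intros Hb Hq H.
  replace (a / b) with ((a * q) * / (b * q)) by (field; lra).
  replace (p / q) with ((p * b) * / (b * q)) by (field; lra).
  apply Rmult_le_compat_r; [left; apply Rinv_0_lt_compat; nra | lra].
Qed.

Lemma rotation_norm (x y c s : R) : s * s + c * c = 1 ->
  (x * c + y * s) ^ 2 + (- x * s + y * c) ^ 2 = x ^ 2 + y ^ 2.
Proof.
  intros H. transitivity ((x ^ 2 + y ^ 2) * (s * s + c * c)); [ring | rewrite H; ring].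
Qed.

Lemma rotation_inverse (x y c s : R) : s * s + c * c = 1 ->
  x = (x * c + y * s) * c - (- x * s + y * c) * s /\
  y = (x * c + y * s) * s + (- x * s + y * c) * c.
Proof.
  intros H. split.
  - transitivity (x * (s * s + c * c)); [rewrite H; ring | ring].
  - transitivity (y * (s * s + c * c)); [rewrite H; ring | ring].
Qed.

Lemma Rdiv_le_div_sqr (c v w X : R) : 0 < c -> 0 < v <= w -> c * v <= X -> c / w <= X / v ^ 2.
Proof.
  intros Hc Hv HX. apply Rdiv_le_Rdiv_of_mul; [lra | apply pow_lt; lra |].
  assert (X * v <= X * w) by (apply Rmult_le_compat_l; nra). nra.
Qed.

(* [auto_derive] writes derivatives as [Derive (fun x => f x)]; fold them back to [Derive f]. *)
Ltac eta_Derive :=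
  repeat match goal with
         | |- context [Derive (fun x => ?f x)] => change (Derive (fun x => f x)) with (Derive f)
         end.

Definition reflect (f : R -> R) : R -> R := fun t => f (- t).

Lemma is_derive_reflect (f : R -> R) (s l : R) :
  is_derive f (- s) l -> is_derive (reflect f) s (- l).
Proof.
  intros Hf. unfold reflect. auto_derive; [now exists l|].
  eta_Derive. rewrite (is_derive_unique _ _ _ Hf). ring.
Qed.

Lemma Derive_reflect (f : R -> R) (s : R) :
  ex_derive f (- s) -> Derive (reflect f) s = - Derive f (- s).
Proof. intros Hf. apply is_derive_unique, is_derive_reflect, Derive_correct, Hf. Qed.

Lemma Derive2_reflect (f : R -> R) (s : R) :
  (forall t, ex_derive f t) -> ex_derive (Derive f) (- s) ->
  Derive (Derive (reflect f)) s = Derive (Derive f) (- s).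
Proof.
  intros Hf Hf2.
  rewrite (Derive_ext (Derive (reflect f)) (fun t => - reflect (Derive f) t))
    by (intro t; now apply Derive_reflect).
  rewrite Derive_opp, Derive_reflect by exact Hf2. ring.
Qed.

Lemma continuous_reflect (f : R -> R) (s : R) : continuous f (- s) -> continuous (reflect f) s.
Proof.
  intros Hf. apply (continuous_comp (fun t : R => - t) f); [|exact Hf].
  apply (continuous_opp (fun t : R => t)), continuous_id.
Qed.

Lemma is_lim_m_infty_of_reflect (f : R -> R) :
  is_lim (reflect f) p_infty p_infty -> is_lim f m_infty p_infty.
Proof.
  intros Hf. apply (is_lim_ext (fun t => reflect f (- t))).
  - intros t. unfold reflect. now rewrite Ropp_involutive.
  - apply (is_lim_comp (reflect f) Ropp m_infty p_infty p_infty Hf).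
    + apply (is_lim_opp (fun t => t) m_infty m_infty), is_lim_id.
    + exists 0. intros t _. discriminate.
Qed.

Definition Knum (h x y : R) : R :=
  2 * (x ^ 2 + h ^ 2 * (1 + y ^ 2)) * x + (h ^ 2 - 1) * (1 + y ^ 2) * y.
Definition Kden (h x y : R) : R := (1 + (x ^ 2 + y ^ 2)) * (h ^ 2 + (x ^ 2 + y ^ 2)).

Lemma Kfun_eq (h x y : R) : Kfun h x y = Knum h x y / Kden h x y.
Proof. reflexivity. Qed.

Lemma Kden_pos (h x y : R) : 0 < h -> 0 < Kden h x y.
Proof. intros Hh. unfold Kden. pose proof (pow2_ge_0 x). pose proof (pow2_ge_0 y). nra. Qed.

Lemma Kfun_opp (h x y : R) : Kfun h (- x) (- y) = - Kfun h x y.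
Proof.
  rewrite !Kfun_eq. unfold Knum, Kden.
  replace ((- x) ^ 2) with (x ^ 2) by ring. replace ((- y) ^ 2) with (y ^ 2) by ring.
  unfold Rdiv. ring.
Qed.

Lemma Kfun_affine_le (h x y a b c : R) : 0 < h ->
  c * Kden h x y <= a * Kden h x y + Knum h x y * b -> c <= a + Kfun h x y * b.
Proof.
  intros Hh H. pose proof (Kden_pos h x y Hh).
  apply (Rmult_le_reg_r (Kden h x y)); [assumption|].
  rewrite Kfun_eq. field_simplify; lra.
Qed.

Lemma Kfun_affine_lt (h x y a b c : R) : 0 < h ->
  c * Kden h x y < a * Kden h x y + Knum h x y * b -> c < a + Kfun h x y * b.
Proof.
  intros Hh H. pose proof (Kden_pos h x y Hh).
  apply (Rmult_lt_reg_r (Kden h x y)); [assumption|].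
  rewrite Kfun_eq. field_simplify; lra.
Qed.

Lemma lyapunov_small_h (h x y : R) : 0 < h -> h ^ 2 <= 1 / 4 ->
  h ^ 2 / 4 <= 1 + Kfun h x y * y.
Proof.
  intros Hh Hh2. apply Kfun_affine_le; [exact Hh|].
  assert (E : 1 * Kden h x y + Knum h x y * y =
              (1 + (x + y) ^ 2) * (x ^ 2 + h ^ 2 + h ^ 2 * y ^ 2) + (1 - h ^ 2) * x ^ 2 * y ^ 2)
    by (unfold Kden, Knum; ring).
  rewrite E. unfold Kden.
  set (k := h ^ 2) in *.
  assert (Hk : 0 < k) by (unfold k; nra).
  pose proof (pow2_ge_0 (x + y)). pose proof (pow2_ge_0 x). pose proof (pow2_ge_0 y).
  assert (0 <= x ^ 2 * y ^ 2) by (apply Rmult_le_pos; lra).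
  assert (A1 : (x + y) ^ 2 * (x ^ 2 + k * y ^ 2) + (1 - k) * x ^ 2 * y ^ 2
               >= k * (2 / 3) * (x ^ 2 + y ^ 2) ^ 2).
  { assert (x ^ 2 + k * y ^ 2 - k * (x ^ 2 + y ^ 2) >= 0) by nra.
    assert ((x + y) ^ 2 * (x ^ 2 + y ^ 2) + 3 * x ^ 2 * y ^ 2 - 2 / 3 * (x ^ 2 + y ^ 2) ^ 2
            = 3 * (x * y + (x ^ 2 + y ^ 2) / 3) ^ 2) by field.
    pose proof (pow2_ge_0 (x * y + (x ^ 2 + y ^ 2) / 3)).
    assert ((x + y) ^ 2 * (x ^ 2 + k * y ^ 2 - k * (x ^ 2 + y ^ 2)) >= 0)
      by (apply Rle_ge, Rmult_le_pos; lra).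
    assert ((1 - k - 3 * k) * (x ^ 2 * y ^ 2) >= 0) by (apply Rle_ge, Rmult_le_pos; lra).
    nra. }
  assert (x ^ 2 + k + k * y ^ 2 >= k + k * (x ^ 2 + y ^ 2)) by nra.
  assert ((x + y) ^ 2 * (x ^ 2 + k + k * y ^ 2 - (x ^ 2 + k * y ^ 2)) >= 0)
    by (apply Rle_ge, Rmult_le_pos; lra).
  pose proof (pow2_ge_0 (x ^ 2 + y ^ 2)).
  nra.
Qed.

Lemma lyapunov_large_h (h x y : R) : 0 < h -> 1 / 4 <= h ^ 2 ->
  1 / 8 <= 1 + Kfun h x y * (y + 2 * x).
Proof.
  intros Hh Hh2. apply Kfun_affine_le; [exact Hh|].
  set (E0 := x ^ 2 + x ^ 2 * (x + y) ^ 2 + x ^ 2 * y ^ 2 + 4 * x ^ 4 - 2 * x * y - 2 * x * y ^ 3).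
  set (E1 := (1 + y ^ 2) * (1 + (2 * x + y) ^ 2) + x ^ 2).
  assert (E : 1 * Kden h x y + Knum h x y * (y + 2 * x) = E0 + h ^ 2 * E1)
    by (unfold E0, E1, Kden, Knum; ring).
  rewrite E. unfold Kden.
  set (k := h ^ 2) in *.
  set (p := x ^ 2 + y ^ 2).
  pose proof (pow2_ge_0 x). pose proof (pow2_ge_0 y).
  assert (HE1 : E1 >= 1 + p).
  { unfold E1, p. pose proof (pow2_ge_0 (2 * x + y)).
    assert (0 <= y ^ 2 * (2 * x + y) ^ 2) by (apply Rmult_le_pos; lra). nra. }
  assert (x ^ 2 * (x + y) ^ 2 + x ^ 2 * y ^ 2 + 4 * x ^ 4 - 2 * x * y ^ 3
          + (1 / 4) * y ^ 2 * (2 * x + y) ^ 2 - 1 / 8 * (x ^ 2 + y ^ 2) ^ 2 >= 0).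
  { pose proof (pow2_ge_0 (x * y)). pose proof (pow2_ge_0 (x ^ 2)). pose proof (pow2_ge_0 (y ^ 2)).
    pose proof (pow2_ge_0 (x * y - y ^ 2 / 4)). pose proof (pow2_ge_0 (x ^ 2 - x * y)).
    pose proof (pow2_ge_0 (2 * x ^ 2 + x * y - y ^ 2 / 8)).
    nra. }
  assert (2.09375 * x ^ 2 - x * y + 0.34375 * y ^ 2 >= 0)
    by (pose proof (pow2_ge_0 (x - y / 4)); nra).
  assert (E0 + E1 / 4 >= 1 / 8 * (1 + p) * (p + 1 / 4)) by (unfold E0, E1, p; nra).
  assert (0 <= p) by (unfold p; lra).
  assert ((k - 1 / 4) * (E1 - (1 + p)) >= 0) by (apply Rle_ge, Rmult_le_pos; lra).
  nra.
Qed.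

Lemma cone_upper_edge_inward (h x : R) : 0 < h -> 1 <= x ->
  0 < -1 + Kfun h x (- x) * (2 * x).
Proof.
  intros Hh Hx. apply Kfun_affine_lt; [exact Hh|].
  assert (E : -1 * Kden h x (- x) + Knum h x (- x) * (2 * x) = (2 + 2 * h ^ 2) * x ^ 4 - h ^ 2)
    by (unfold Kden, Knum; ring).
  rewrite E. assert (1 <= x ^ 2) by nra. assert (1 <= x ^ 4) by nra. pose proof (pow2_ge_0 h). nra.
Qed.

Lemma cone_lower_edge_inward (h x : R) : 0 < h ->
  0 < 3 + Kfun h x (-3 * x) * (-10 * x).
Proof.
  intros Hh. apply Kfun_affine_lt; [exact Hh|].
  assert (E : 3 * Kden h x (-3 * x) + Knum h x (-3 * x) * (-10 * x)
              = (10 + 90 * h ^ 2) * x ^ 4 + 40 * h ^ 2 * x ^ 2 + 3 * h ^ 2)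
    by (unfold Kden, Knum; ring).
  rewrite E. pose proof (pow2_ge_0 x). pose proof (pow2_ge_0 (x ^ 2)).
  assert (0 < h ^ 2) by nra. assert (0 <= h ^ 2 * x ^ 2) by nra.
  assert (x ^ 4 = (x ^ 2) ^ 2) by ring.
  nra.
Qed.

Lemma drift_numerator_eq (h x y : R) : Knum h x y * (x ^ 2 + y ^ 2) + y * Kden h x y =
  (x ^ 2 + y ^ 2) * (2 * x + y) * (x ^ 2 + h ^ 2 * y ^ 2) + 2 * h ^ 2 * (x ^ 2 + y ^ 2) * (x + y)
  + h ^ 2 * y.
Proof. unfold Knum, Kden. ring. Qed.

(* Along the flow, [-y/x] has derivative [(y + K r^2) / x^2] and [-x/y] has derivative
   [(-y - K r^2) / y^2]. *)
Lemma drift_upper_region (h x y : R) : 0 < h -> 2 + 2 * h <= x -> 0 < x + y ->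
  h ^ 2 / (2 * (1 + h ^ 2)) * x <= y + Kfun h x y * (x ^ 2 + y ^ 2).
Proof.
  intros Hh Hx Hxy. apply Kfun_affine_le; [exact Hh|].
  assert (Hk1 : 0 < 2 * (1 + h ^ 2)) by nra.
  apply (Rmult_le_reg_l (2 * (1 + h ^ 2))); [exact Hk1|].
  replace (2 * (1 + h ^ 2) * (h ^ 2 / (2 * (1 + h ^ 2)) * x * Kden h x y)) with
    (h ^ 2 * x * Kden h x y) by (field; lra).
  replace (y * Kden h x y + Knum h x y * (x ^ 2 + y ^ 2))
    with (Knum h x y * (x ^ 2 + y ^ 2) + y * Kden h x y) by ring.
  rewrite drift_numerator_eq. unfold Kden.
  set (k := h ^ 2). assert (Hk : 0 < k) by (unfold k; nra).
  set (R2 := x ^ 2 + y ^ 2).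
  assert (HR : 4 * (1 + k) <= R2) by (unfold R2, k; pose proof (pow2_ge_0 y); nra).
  assert (Hx0 : 0 < x) by lra.
  assert ((1 + k) * (x ^ 2 + k * y ^ 2) >= k * R2)
    by (unfold R2; pose proof (pow2_ge_0 x); pose proof (pow2_ge_0 y); nra).
  assert (0 <= x ^ 2 + k * y ^ 2) by (pose proof (pow2_ge_0 x); pose proof (pow2_ge_0 y); nra).
  assert (T1 : (1 + k) * (R2 * (2 * x + y) * (x ^ 2 + k * y ^ 2)) >= k * x * R2 ^ 2).
  { assert (R2 * (2 * x + y) * ((1 + k) * (x ^ 2 + k * y ^ 2)) >= R2 * x * (k * R2)).
    { apply Rle_ge. apply Rmult_le_compat.
      - apply Rmult_le_pos; lra.
      - nra.
      - apply Rmult_le_compat_l; lra.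
      - lra. }
    nra. }
  assert (0 <= 2 * k * R2 * (x + y)) by (apply Rmult_le_pos; [apply Rmult_le_pos|]; lra).
  assert (k * y >= - (k * x)) by nra.
  assert (R2 ^ 2 >= 2 * (1 + k) + (1 + k) * R2 + k) by nra.
  assert (0 < k * x) by nra.
  assert (k * x * R2 ^ 2 >= k * x * (2 * (1 + k) + (1 + k) * R2 + k))
    by (apply Rle_ge, Rmult_le_compat_l; lra).
  nra.
Qed.

Lemma drift_lower_region (h x y : R) : 0 < h -> y <= -1 -> 2 * y <= x -> x <= - y / 3 ->
  h ^ 2 / (18 * (h ^ 2 + 5)) * - y <= - y + Kfun h x y * - (x ^ 2 + y ^ 2).
Proof.
  intros Hh Hy H1 H2. apply Kfun_affine_le; [exact Hh|].
  assert (Hk1 : 0 < 18 * (h ^ 2 + 5)) by nra.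
  apply (Rmult_le_reg_l (18 * (h ^ 2 + 5))); [exact Hk1|].
  replace (18 * (h ^ 2 + 5) * (h ^ 2 / (18 * (h ^ 2 + 5)) * - y * Kden h x y)) with
    (h ^ 2 * - y * Kden h x y) by (field; lra).
  replace (- y * Kden h x y + Knum h x y * - (x ^ 2 + y ^ 2))
    with (- (Knum h x y * (x ^ 2 + y ^ 2) + y * Kden h x y)) by ring.
  rewrite drift_numerator_eq. unfold Kden.
  set (k := h ^ 2). assert (Hk : 0 < k) by (unfold k; nra).
  set (R2 := x ^ 2 + y ^ 2).
  assert (y ^ 2 <= R2) by (unfold R2; pose proof (pow2_ge_0 x); lra).
  assert (R2 <= 5 * y ^ 2) by (unfold R2; nra).
  assert (1 <= y ^ 2) by nra.
  assert (- (2 * x + y) >= - y / 3) by lra.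
  assert (x ^ 2 + k * y ^ 2 >= k * y ^ 2) by (pose proof (pow2_ge_0 x); lra).
  assert (- (x + y) >= 0) by lra.
  assert (R2 * (- (2 * x + y)) * (x ^ 2 + k * y ^ 2) >= y ^ 2 * (- y / 3) * (k * y ^ 2)).
  { apply Rle_ge. apply Rmult_le_compat.
    - apply Rmult_le_pos; nra.
    - nra.
    - apply Rmult_le_compat; nra.
    - lra. }
  assert (0 <= 2 * k * R2 * (- (x + y))) by (apply Rmult_le_pos; [apply Rmult_le_pos|]; nra).
  assert ((1 + R2) * (k + R2) <= 6 * y ^ 2 * ((k + 5) * y ^ 2)) by (apply Rmult_le_compat; nra).
  assert (0 <= k * - y) by nra.
  assert (k * - y * ((1 + R2) * (k + R2)) <= k * - y * (6 * y ^ 2 * ((k + 5) * y ^ 2)))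
    by (apply Rmult_le_compat_l; lra).
  nra.
Qed.

Definition in_cone (x y : R) : Prop := -3 * x <= y <= - x.

Section Flow.

Variables (h : R) (tau mu : R -> R).
Hypothesis h_pos : 0 < h.
Hypothesis tau_deriv : forall s, is_derive tau s (1 + Kfun h (tau s) (mu s) * mu s).
Hypothesis mu_deriv : forall s, is_derive mu s (- (Kfun h (tau s) (mu s) * tau s)).

Lemma flow_lincomb_derive (a b s : R) :
  is_derive (fun s => a * tau s + b * mu s) s
    (a * (1 + Kfun h (tau s) (mu s) * mu s) + b * - (Kfun h (tau s) (mu s) * tau s)).
Proof.
  apply (is_derive_plus (fun s => a * tau s) (fun s => b * mu s));
    apply is_derive_scal; [apply tau_deriv | apply mu_deriv].
Qed.

Lemma flow_lincomb_Derive (a b s : R) :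
  Derive (fun s => a * tau s + b * mu s) s =
    a * (1 + Kfun h (tau s) (mu s) * mu s) + b * - (Kfun h (tau s) (mu s) * tau s).
Proof. apply is_derive_unique, flow_lincomb_derive. Qed.

Lemma flow_Derive_tau (s : R) : Derive (fun t => tau t) s = 1 + Kfun h (tau s) (mu s) * mu s.
Proof. apply is_derive_unique, tau_deriv. Qed.

Lemma flow_Derive_mu (s : R) : Derive (fun t => mu t) s = - (Kfun h (tau s) (mu s) * tau s).
Proof. apply is_derive_unique, mu_deriv. Qed.

Lemma flow_lyapunov_unbounded (M : R) :
  exists S, 0 <= S /\ forall s, S <= s -> M <= tau s \/ M <= tau s - 2 * mu s.
Proof.
  destruct (Rle_lt_dec (h ^ 2) (1 / 4)) as [Hsmall|Hlarge].
  - destruct (eventually_ge_of_derive_ge tau _ (h ^ 2 / 4) ltac:(nra) tau_deriv) with (M := M)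
      as [S [HS HM]].
    { intros s. now apply lyapunov_small_h. }
    exists S. split; [exact HS|]. intros s Hs. left. now apply HM.
  - destruct (eventually_ge_of_derive_ge (fun s => 1 * tau s + -2 * mu s) _ (1 / 8) ltac:(lra)
                (flow_lincomb_derive 1 (-2))) with (M := M) as [S [HS HM]].
    { intros s. pose proof (lyapunov_large_h h (tau s) (mu s) h_pos ltac:(lra)). lra. }
    exists S. split; [exact HS|]. intros s Hs. right. specialize (HM s Hs). lra.
Qed.

Lemma flow_cone_invariant (S2 s3 : R) :
  (forall s, S2 <= s -> mu s + tau s = 0 -> 1 <= tau s) ->
  S2 <= s3 -> in_cone (tau s3) (mu s3) -> forall s, s3 <= s -> in_cone (tau s) (mu s).
Proof.
  intros Hedge Hs3 [Hlo Hup] s Hs. split.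
  - enough (-3 * tau s + -1 * mu s <= 0) by lra.
    apply (nonpos_of_derive_neg_at_zeros (fun s => -3 * tau s + -1 * mu s) s3);
      [| lra | | exact Hs].
    + intros t. eexists. apply flow_lincomb_derive.
    + intros t _ Hz. rewrite flow_lincomb_Derive. replace (mu t) with (-3 * tau t) by lra.
      pose proof (cone_lower_edge_inward h (tau t) h_pos). lra.
  - enough (1 * tau s + 1 * mu s <= 0) by lra.
    apply (nonpos_of_derive_neg_at_zeros (fun s => 1 * tau s + 1 * mu s) s3);
      [| lra | | exact Hs].
    + intros t. eexists. apply flow_lincomb_derive.
    + intros t Ht Hz. rewrite flow_lincomb_Derive.
      assert (1 <= tau t) by (apply Hedge; lra).
      replace (mu t) with (- tau t) by lra.
      pose proof (cone_upper_edge_inward h (tau t) h_pos ltac:(lra)). lra.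
Qed.

Variables (A B : R).
Hypothesis A_pos : 0 < A.
Hypothesis B_pos : 0 < B.
Hypothesis flow_growth :
  forall s, 0 <= s -> Rabs (tau s) <= A + B * s /\ Rabs (mu s) <= A + B * s.

Lemma flow_upper_region_transient (S2 : R) : 0 <= S2 ->
  ~ (forall s, S2 <= s -> 0 < mu s + tau s /\ 2 + 2 * h <= tau s).
Proof.
  intros HS2 Hreg.
  (* [-mu/tau] would grow like a logarithm, while [mu + tau > 0] keeps it below [1]. *)
  set (c := h ^ 2 / (2 * (1 + h ^ 2))).
  assert (Hc : 0 < c) by (apply Rdiv_lt_0_compat; nra).
  destruct (unbounded_of_derive_ge_inv_linear (fun s => - mu s / tau s)
              (fun s => (mu s + Kfun h (tau s) (mu s) * (tau s ^ 2 + mu s ^ 2)) / tau s ^ 2)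
              S2 c A B HS2 Hc A_pos B_pos) with (M := 1) as [t0 Ht0].
  - intros t Ht. destruct (Hreg t Ht) as [_ Ht2].
    auto_derive; [repeat split; [now exists (- (Kfun h (tau t) (mu t) * tau t))
                               | now exists (1 + Kfun h (tau t) (mu t) * mu t) | lra] |].
    rewrite flow_Derive_tau, flow_Derive_mu.
    field. lra.
  - intros t Ht. destruct (Hreg t Ht) as [Hut Ht2].
    apply Rdiv_le_div_sqr; [exact Hc | split; [lra|] | apply drift_upper_region; lra].
    destruct (flow_growth t) as [Hg _]; [lra|]. pose proof (Rle_abs (tau t)). lra.
  - set (t := Rmax t0 S2).
    specialize (Ht0 t (Rmax_l _ _)). destruct (Hreg t (Rmax_r _ _)) as [Hut Ht2].
    apply (Rmult_lt_compat_r (tau t)) in Ht0; [|lra].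
    replace (- mu t / tau t * tau t) with (- mu t) in Ht0 by (field; lra). lra.
Qed.

Lemma flow_lower_region_transient (S2 : R) : 0 <= S2 ->
  ~ (forall s, S2 <= s -> mu s + 3 * tau s < 0 /\ mu s <= -1 /\ 2 * mu s <= tau s).
Proof.
  intros HS2 Hreg.
  (* [-tau/mu] would grow like a logarithm, while [mu + 3 tau < 0] keeps it below [1/3]. *)
  set (c := h ^ 2 / (18 * (h ^ 2 + 5))).
  assert (Hc : 0 < c) by (apply Rdiv_lt_0_compat; nra).
  destruct (unbounded_of_derive_ge_inv_linear (fun s => - tau s / mu s)
              (fun s => (- mu s + Kfun h (tau s) (mu s) * - (tau s ^ 2 + mu s ^ 2)) / (- mu s) ^ 2)
              S2 c A B HS2 Hc A_pos B_pos) with (M := 1 / 3) as [t0 Ht0].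
  - intros t Ht. destruct (Hreg t Ht) as [_ [Hm _]].
    auto_derive; [repeat split; [now exists (1 + Kfun h (tau t) (mu t) * mu t)
                               | now exists (- (Kfun h (tau t) (mu t) * tau t)) | lra] |].
    rewrite flow_Derive_tau, flow_Derive_mu.
    field. lra.
  - intros t Ht. destruct (Hreg t Ht) as [Hlt [Hm1 Hm2]].
    apply Rdiv_le_div_sqr; [exact Hc | split; [lra|] | apply drift_lower_region; lra].
    destruct (flow_growth t) as [_ Hg]; [lra|]. pose proof (Rabs_maj2 (mu t)). lra.
  - set (t := Rmax t0 S2).
    specialize (Ht0 t (Rmax_l _ _)). destruct (Hreg t (Rmax_r _ _)) as [Hlt [Hm1 Hm2]].
    apply (Rmult_lt_compat_r (- mu t)) in Ht0; [|lra].
    replace (- tau t / mu t * - mu t) with (tau t) in Ht0 by (field; lra). lra.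
Qed.

Lemma flow_eventually_in_cone :
  exists S1, 0 <= S1 /\ forall s, S1 <= s -> 2 + 2 * h <= tau s /\ in_cone (tau s) (mu s).
Proof.
  set (T := 2 + 2 * h).
  destruct (flow_lyapunov_unbounded (7 * T + 7)) as [S2 [HS2 Hfar]].
  assert (F1 : forall s, S2 <= s -> 0 <= mu s + tau s -> T <= tau s)
    by (intros s Hs H; destruct (Hfar s Hs); unfold T in *; lra).
  assert (F2 : forall s, S2 <= s -> mu s + 3 * tau s <= 0 -> mu s <= -1 /\ 2 * mu s <= tau s)
    by (intros s Hs H; destruct (Hfar s Hs); unfold T in *; split; lra).
  assert (F3 : forall s, S2 <= s -> in_cone (tau s) (mu s) -> T <= tau s)
    by (intros s Hs [H H']; destruct (Hfar s Hs); unfold T in *; lra).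
  destruct (classic (exists s3, S2 <= s3 /\ in_cone (tau s3) (mu s3))) as [[s3 [Hs3 Hin]]|Hnever].
  - exists s3. split; [lra|]. intros s Hs.
    assert (in_cone (tau s) (mu s)).
    { apply (flow_cone_invariant S2 s3); try assumption.
      intros t Ht Hz. specialize (F1 t Ht). unfold T in F1. lra. }
    split; [apply F3; [lra|] |]; assumption.
  - exfalso.
    assert (Hsum : forall s, S2 <= s -> mu s + tau s <> 0).
    { intros s Hs Hz. apply Hnever. exists s. specialize (F1 s Hs).
      split; [exact Hs | unfold in_cone, T in *; lra]. }
    destruct (continuous_sign_constant (fun s => mu s + tau s) S2) as [Hup|Hdown];
      [| exact Hsum | |].
    + intros t _. apply continuity_pt_plus; apply continuity_pt_of_ex_derive;
        [exists (- (Kfun h (tau t) (mu t) * tau t)) | exists (1 + Kfun h (tau t) (mu t) * mu t)];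
        auto.
    + apply (flow_upper_region_transient S2 HS2). intros s Hs.
      split; [now apply Hup | apply F1; [exact Hs | left; now apply Hup]].
    + apply (flow_lower_region_transient S2 HS2). intros s Hs.
      assert (Hbelow : mu s + 3 * tau s < 0).
      { specialize (Hdown s Hs).
        destruct (Rlt_le_dec (mu s + 3 * tau s) 0) as [|Hge]; [assumption|].
        exfalso. apply Hnever. exists s. split; [exact Hs | unfold in_cone; lra]. }
      split; [exact Hbelow | apply F2; lra].
Qed.

End Flow.

(* For [alpha = r (cos w, sin w)] one has [w' = - mu / r^2]. *)
Definition angular_speed (a1 a2 : R -> R) (s : R) : R :=
  - mu_of a1 a2 s / (a1 s ^ 2 + a2 s ^ 2).

Section Curve.

Variables a1 a2 : R -> R.
Hypothesis unit_speed : arclength_curve a1 a2.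

Lemma curve_ex_derive (s : R) :
  ex_derive a1 s /\ ex_derive a2 s /\ ex_derive (Derive a1) s /\ ex_derive (Derive a2) s.
Proof. destruct (unit_speed s) as [H1 [H2 [H3 [H4 _]]]]. now repeat split. Qed.

Lemma curve_speed (s : R) : Derive a1 s ^ 2 + Derive a2 s ^ 2 = 1.
Proof. apply (unit_speed s). Qed.

Lemma curve_accel_orthogonal (s : R) :
  Derive a1 s * Derive (Derive a1) s + Derive a2 s * Derive (Derive a2) s = 0.
Proof.
  destruct (curve_ex_derive s) as [_ [_ [H1 H2]]].
  assert (Hd : is_derive (fun t => Derive a1 t ^ 2 + Derive a2 t ^ 2) s
                 (2 * (Derive a1 s * Derive (Derive a1) s + Derive a2 s * Derive (Derive a2) s))).
  { auto_derive; [now split | eta_Derive; ring]. }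
  assert (H0 : is_derive (fun t => Derive a1 t ^ 2 + Derive a2 t ^ 2) s 0).
  { apply (is_derive_ext (fun _ => 1));
      [intro t; symmetry; apply curve_speed | auto_derive; auto]. }
  pose proof (is_derive_unique _ _ _ Hd) as E. rewrite (is_derive_unique _ _ _ H0) in E. lra.
Qed.

Lemma curve_frenet (s : R) :
  Derive (Derive a1) s = - Derive a2 s * curv a1 a2 s /\
  Derive (Derive a2) s = Derive a1 s * curv a1 a2 s.
Proof.
  pose proof (curve_speed s) as Hn. pose proof (curve_accel_orthogonal s) as Ho.
  unfold curv, dot.
  set (d1 := Derive a1 s) in *. set (d2 := Derive a2 s) in *.
  set (e1 := Derive (Derive a1) s) in *. set (e2 := Derive (Derive a2) s) in *.
  split.
  - transitivity (e1 * (d1 ^ 2 + d2 ^ 2) - d1 * (d1 * e1 + d2 * e2)); [rewrite Hn, Ho | ]; ring.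
  - transitivity (e2 * (d1 ^ 2 + d2 ^ 2) - d2 * (d1 * e1 + d2 * e2)); [rewrite Hn, Ho | ]; ring.
Qed.

Lemma is_derive_tau_of (s : R) :
  is_derive (tau_of a1 a2) s (1 + curv a1 a2 s * mu_of a1 a2 s).
Proof.
  destruct (curve_ex_derive s) as [H1 [H2 [H3 H4]]]. destruct (curve_frenet s) as [E1 E2].
  unfold tau_of, mu_of, dot. auto_derive; [now repeat split|].
  eta_Derive. rewrite E1, E2. pose proof (curve_speed s). nra.
Qed.

Lemma is_derive_mu_of (s : R) :
  is_derive (mu_of a1 a2) s (- (curv a1 a2 s * tau_of a1 a2 s)).
Proof.
  destruct (curve_ex_derive s) as [H1 [H2 [H3 H4]]]. destruct (curve_frenet s) as [E1 E2].
  unfold tau_of, mu_of, dot. auto_derive; [now repeat split|].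
  eta_Derive. rewrite E1, E2. ring.
Qed.

Lemma curve_tau_mu_growth (s : R) :
  Rabs (tau_of a1 a2 s) <= Rabs (a1 0) + Rabs (a2 0) + 2 * Rabs s /\
  Rabs (mu_of a1 a2 s) <= Rabs (a1 0) + Rabs (a2 0) + 2 * Rabs s.
Proof.
  assert (Hd : forall t, Rabs (Derive a1 t) <= 1 /\ Rabs (Derive a2 t) <= 1).
  { intros t. pose proof (curve_speed t).
    pose proof (pow2_ge_0 (Derive a1 t)). pose proof (pow2_ge_0 (Derive a2 t)).
    split; apply Rabs_le; split; nra. }
  assert (Hlip : forall f, (forall t, ex_derive f t) -> (forall t, Rabs (Derive f t) <= 1) ->
                 Rabs (f s) <= Rabs (f 0) + Rabs s).
  { intros f Hf Hb.
    pose proof (Rabs_sub_le_of_derive_bounded f (Derive f)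
                  (fun t => Derive_correct _ _ (Hf t)) Hb 0 s).
    rewrite Rminus_0_r in H. pose proof (Rabs_triang_inv (f s) (f 0)). lra. }
  assert (H1 : Rabs (a1 s) <= Rabs (a1 0) + Rabs s)
    by (apply Hlip; intro t; [apply (curve_ex_derive t) | apply Hd]).
  assert (H2 : Rabs (a2 s) <= Rabs (a2 0) + Rabs s)
    by (apply Hlip; intro t; [apply (curve_ex_derive t) | apply Hd]).
  destruct (Hd s) as [D1 D2].
  pose proof (Rabs_pos (a1 s)). pose proof (Rabs_pos (a2 s)).
  unfold tau_of, mu_of, dot. split; eapply Rle_trans; try apply Rabs_triang;
    rewrite !Rabs_mult, ?Rabs_Ropp; nra.
Qed.

Lemma tau_of_sqr_add_mu_of_sqr (s : R) :
  tau_of a1 a2 s ^ 2 + mu_of a1 a2 s ^ 2 = a1 s ^ 2 + a2 s ^ 2.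
Proof.
  unfold tau_of, mu_of, dot.
  transitivity ((a1 s ^ 2 + a2 s ^ 2) * (Derive a1 s ^ 2 + Derive a2 s ^ 2));
    [ring | rewrite curve_speed; ring].
Qed.

Lemma polar_defect_vanishes (S1 a0 : R) (om : R -> R) :
  (forall s, S1 < s -> 0 < a1 s ^ 2 + a2 s ^ 2) ->
  (forall s, S1 < s -> is_derive om s (angular_speed a1 a2 s)) ->
  S1 < a0 -> - a1 a0 * sin (om a0) + a2 a0 * cos (om a0) = 0 ->
  forall s, a0 <= s -> - a1 s * sin (om s) + a2 s * cos (om s) = 0.
Proof.
  intros Hr Hom Ha0 H0 s Hs.
  set (W := fun s => (- a1 s * sin (om s) + a2 s * cos (om s)) ^ 2 / (a1 s ^ 2 + a2 s ^ 2)).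
  assert (HW : W s = W a0).
  { apply (constant_of_derive_zero W a0); [|exact Hs].
    intros x Hx. specialize (Hr x ltac:(lra)). destruct (curve_ex_derive x) as [H1 [H2 _]].
    unfold W. auto_derive.
    - repeat split; try assumption; [exists (angular_speed a1 a2 x); apply Hom; lra ..| nra].
    - eta_Derive. rewrite (is_derive_unique om x _ (Hom x ltac:(lra))).
      unfold angular_speed, mu_of, dot. field. lra. }
  assert (HWs : W s = 0) by (rewrite HW; unfold W; rewrite H0; unfold Rdiv; ring).
  unfold W in HWs. specialize (Hr s ltac:(lra)).
  set (G := - a1 s * sin (om s) + a2 s * cos (om s)) in *.
  assert (G ^ 2 = 0).
  { apply (Rmult_eq_reg_r (/ (a1 s ^ 2 + a2 s ^ 2))); [rewrite Rmult_0_l; exact HWs|].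
    apply Rinv_neq_0_compat. lra. }
  nra.
Qed.

Lemma polar_angle_propagates (S1 a0 : R) (om : R -> R) :
  (forall s, S1 < s -> 0 < a1 s ^ 2 + a2 s ^ 2) ->
  (forall s, S1 < s -> is_derive om s (angular_speed a1 a2 s)) ->
  S1 < a0 -> polar_angle_at a1 a2 om a0 -> forall s, a0 <= s -> polar_angle_at a1 a2 om s.
Proof.
  intros Hr Hom Ha0 [P1 P2].
  set (G1 := fun s => a1 s * cos (om s) + a2 s * sin (om s)).
  assert (Hsc : forall s, sin (om s) * sin (om s) + cos (om s) * cos (om s) = 1).
  { intros s. pose proof (sin2_cos2 (om s)). unfold Rsqr in H. exact H. }
  assert (HG2 : forall s, a0 <= s -> - a1 s * sin (om s) + a2 s * cos (om s) = 0).
  { apply (polar_defect_vanishes S1 a0 om Hr Hom Ha0).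
    set (r0 := sqrt (a1 a0 ^ 2 + a2 a0 ^ 2)) in P1, P2. rewrite P1, P2. ring. }
  assert (HG1sq : forall s, a0 <= s -> G1 s ^ 2 = a1 s ^ 2 + a2 s ^ 2).
  { intros s Hs. rewrite <- (rotation_norm (a1 s) (a2 s) (cos (om s)) (sin (om s)) (Hsc s)).
    unfold G1. rewrite (HG2 s Hs). ring. }
  assert (HG1 : forall s, a0 <= s -> 0 < G1 s).
  { destruct (continuous_sign_constant G1 a0) as [Hpos|Hneg]; [| | exact Hpos |].
    - intros s Hs. destruct (curve_ex_derive s) as [H1 [H2 _]].
      apply continuity_pt_of_ex_derive. unfold G1. auto_derive.
      repeat split; try assumption; exists (angular_speed a1 a2 s); apply Hom; lra.
    - intros s Hs H0. specialize (HG1sq s Hs). specialize (Hr s ltac:(lra)).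
      rewrite H0 in HG1sq. lra.
    - exfalso. specialize (Hneg a0 (Rle_refl a0)). revert Hneg. unfold G1.
      set (r0 := sqrt (a1 a0 ^ 2 + a2 a0 ^ 2)) in P1, P2. rewrite P1, P2.
      assert (0 <= r0) by apply sqrt_pos.
      replace (r0 * cos (om a0) * cos (om a0) + r0 * sin (om a0) * sin (om a0))
        with (r0 * (sin (om a0) * sin (om a0) + cos (om a0) * cos (om a0))) by ring.
      rewrite Hsc. lra. }
  intros s Hs. unfold polar_angle_at.
  rewrite <- (HG1sq s Hs), sqrt_pow2 by (left; now apply HG1).
  destruct (rotation_inverse (a1 s) (a2 s) (cos (om s)) (sin (om s)) (Hsc s)) as [E1 E2].
  unfold G1. rewrite (HG2 s Hs) in E1, E2. split; lra.
Qed.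

Lemma polar_angle_primitive (S1 a0 : R) :
  (forall s, S1 < s -> 0 < a1 s ^ 2 + a2 s ^ 2) -> S1 < a0 ->
  exists om, (forall s, S1 < s -> is_derive om s (angular_speed a1 a2 s)) /\
             polar_angle_at a1 a2 om a0.
Proof.
  intros Hr Ha0.
  assert (Hc : forall s, S1 < s -> continuous (angular_speed a1 a2) s).
  { intros s Hs. apply (ex_derive_continuous (K:=R_AbsRing) (V:=R_NormedModule)).
    specialize (Hr s Hs). destruct (curve_ex_derive s) as [H1 [H2 _]].
    unfold angular_speed. auto_derive.
    repeat split; try assumption; [eexists; apply is_derive_mu_of | nra]. }
  destruct (polar_coordinates (a1 a0) (a2 a0)) as [w0 Hw0].
  exists (fun s => w0 + RInt (angular_speed a1 a2) a0 s). split.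
  - intros s Hs. evar_last.
    + apply (is_derive_plus (fun _ => w0) (fun s => RInt (angular_speed a1 a2) a0 s)).
      * apply is_derive_const.
      * apply (is_derive_RInt (angular_speed a1 a2) (fun s => RInt (angular_speed a1 a2) a0 s)
                 a0 s); [|now apply Hc].
        apply (filter_imp (fun y => S1 < y)); [|now apply (open_gt S1)].
        intros y Hy. apply (RInt_correct (V:=R_CompleteNormedModule)).
        apply (ex_RInt_continuous (V:=R_CompleteNormedModule)). intros z Hz. apply Hc.
        assert (S1 < Rmin a0 y) by (apply Rmin_glb_lt; lra). destruct Hz. lra.
    + simpl. unfold plus, zero; simpl. ring.
  - unfold polar_angle_at. rewrite RInt_point. unfold zero; simpl. rewrite Rplus_0_r. exact Hw0.
Qed.

Lemma polar_angles_differ_by_const (S0 : R) (om om' : R -> R) :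
  (forall s, S0 < s -> 0 < a1 s ^ 2 + a2 s ^ 2) ->
  (forall s, S0 < s -> continuous om s /\ polar_angle_at a1 a2 om s) ->
  (forall s, S0 < s -> continuous om' s /\ polar_angle_at a1 a2 om' s) ->
  forall s t, S0 < s -> S0 < t -> om' s - om s = om' t - om t.
Proof.
  intros Hr Hom Hom' s t Hs Ht.
  apply (constant_of_cos_eq_1 (fun s => om' s - om s) S0); try assumption.
  - intros x Hx. apply continuity_pt_minus; apply continuity_pt_filterlim; [apply Hom' | apply Hom];
      exact Hx.
  - intros x Hx. destruct (Hom x Hx) as [_ [P1 P2]]. destruct (Hom' x Hx) as [_ [Q1 Q2]].
    assert (Hr0 : 0 < sqrt (a1 x ^ 2 + a2 x ^ 2)) by (apply sqrt_lt_R0, Hr, Hx).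
    assert (Hc : cos (om' x) = cos (om x))
      by (apply (Rmult_eq_reg_l (sqrt (a1 x ^ 2 + a2 x ^ 2))); lra).
    assert (Hsn : sin (om' x) = sin (om x))
      by (apply (Rmult_eq_reg_l (sqrt (a1 x ^ 2 + a2 x ^ 2))); lra).
    rewrite cos_minus, Hc, Hsn. pose proof (sin2_cos2 (om x)). unfold Rsqr in H. lra.
Qed.

Lemma angular_speed_in_cone (s w : R) :
  0 < tau_of a1 a2 s <= w -> in_cone (tau_of a1 a2 s) (mu_of a1 a2 s) ->
  / (10 * w) <= angular_speed a1 a2 s.
Proof.
  intros Hw [Hlo Hup]. unfold angular_speed. rewrite <- tau_of_sqr_add_mu_of_sqr.
  set (x := tau_of a1 a2 s) in *. set (y := mu_of a1 a2 s) in *.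
  replace (/ (10 * w)) with (1 / (10 * w)) by (field; lra).
  apply Rdiv_le_Rdiv_of_mul; [lra | nra |].
  assert (- y * (10 * w) >= 10 * x * x) by nra. nra.
Qed.

Lemma cone_polar_angle_at_p_infty (S1 T A B : R) :
  0 <= S1 -> 0 < T -> 0 < A -> 0 < B ->
  (forall s, S1 <= s -> T <= tau_of a1 a2 s /\ in_cone (tau_of a1 a2 s) (mu_of a1 a2 s)) ->
  (forall s, 0 <= s -> tau_of a1 a2 s <= A + B * s) ->
  forall S0, S1 < S0 ->
  (forall s, S0 < s -> (a1 s, a2 s) <> (0, 0)) /\
  (exists omega, forall s, S0 < s -> continuous omega s /\ polar_angle_at a1 a2 omega s) /\
  (forall omega, (forall s, S0 < s -> continuous omega s /\ polar_angle_at a1 a2 omega s) ->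
     is_lim omega p_infty p_infty).
Proof.
  intros HS1 HT HA HB Hcone Hgrowth S0 HS0.
  assert (Hr : forall s, S1 < s -> 0 < a1 s ^ 2 + a2 s ^ 2).
  { intros s Hs. rewrite <- tau_of_sqr_add_mu_of_sqr.
    destruct (Hcone s) as [Ht _]; [lra|]. pose proof (pow2_ge_0 (mu_of a1 a2 s)). nra. }
  set (a0 := (S1 + S0) / 2).
  destruct (polar_angle_primitive S1 a0 Hr ltac:(unfold a0; lra))
    as [om [Hom Hom0]].
  assert (Hpolar : forall s, a0 <= s -> polar_angle_at a1 a2 om s)
    by (apply (polar_angle_propagates S1); auto; unfold a0; lra).
  assert (Homc : forall s, S1 < s -> continuous om s).
  { intros s Hs. apply (ex_derive_continuous (K:=R_AbsRing) (V:=R_NormedModule)).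
    eexists. now apply Hom. }
  assert (Hlim : forall M, exists t0, forall t, t0 <= t -> M < om t).
  { apply (unbounded_of_derive_ge_inv_linear om (angular_speed a1 a2) a0 (1 / 10) A B);
      try (unfold a0; lra).
    - intros t Ht. apply Hom. unfold a0 in Ht. lra.
    - intros t Ht. unfold a0 in Ht. destruct (Hcone t) as [HTt Hin]; [lra|].
      replace (1 / 10 / (A + B * t)) with (/ (10 * (A + B * t))) by (field; nra).
      apply angular_speed_in_cone; [split; [lra | apply Hgrowth; lra] | exact Hin]. }
  split; [|split].
  - intros s Hs Heq. injection Heq as E1 E2. specialize (Hr s ltac:(lra)).
    rewrite E1, E2 in Hr. lra.
  - exists om. intros s Hs. split; [apply Homc; lra | apply Hpolar; unfold a0; lra].
  - intros omega Homega.
    apply (is_lim_p_infty_of_shift om omega S0 (omega (S0 + 1) - om (S0 + 1)) Hlim).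
    intros s Hs.
    pose proof (polar_angles_differ_by_const S0 om omega ltac:(intros; apply Hr; lra)
                  ltac:(intros x Hx; split; [apply Homc | apply Hpolar]; unfold a0; lra)
                  Homega s (S0 + 1) Hs ltac:(lra)).
    lra.
Qed.

End Curve.

Lemma curvature_condition_polar_angle_at_p_infty (h : R) (a1 a2 : R -> R) :
  0 < h -> arclength_curve a1 a2 ->
  (forall s, curv a1 a2 s = Kfun h (tau_of a1 a2 s) (mu_of a1 a2 s)) ->
  exists S1, 0 <= S1 /\ forall S0, S1 < S0 ->
  (forall s, S0 < s -> (a1 s, a2 s) <> (0, 0)) /\
  (exists omega, forall s, S0 < s -> continuous omega s /\ polar_angle_at a1 a2 omega s) /\
  (forall omega, (forall s, S0 < s -> continuous omega s /\ polar_angle_at a1 a2 omega s) ->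
     is_lim omega p_infty p_infty).
Proof.
  intros Hh Hc Hk.
  set (A := Rabs (a1 0) + Rabs (a2 0) + 1).
  assert (HA : 0 < A)
    by (unfold A; pose proof (Rabs_pos (a1 0)); pose proof (Rabs_pos (a2 0)); lra).
  assert (Hgrowth : forall s, 0 <= s ->
            Rabs (tau_of a1 a2 s) <= A + 2 * s /\ Rabs (mu_of a1 a2 s) <= A + 2 * s).
  { intros s Hs. destruct (curve_tau_mu_growth a1 a2 Hc s) as [G1 G2].
    rewrite (Rabs_right s) in G1, G2 by lra. unfold A. lra. }
  destruct (flow_eventually_in_cone h (tau_of a1 a2) (mu_of a1 a2) Hh) with (A := A) (B := 2)
    as [S1 [HS1 Hcone]]; try assumption; try lra.
  - intros s. rewrite <- Hk. apply is_derive_tau_of, Hc.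
  - intros s. rewrite <- Hk. apply is_derive_mu_of, Hc.
  - exists S1. split; [exact HS1|].
    apply (cone_polar_angle_at_p_infty a1 a2 Hc S1 (2 + 2 * h) A 2); try assumption; try lra.
    intros s Hs. pose proof (Rle_abs (tau_of a1 a2 s)). pose proof (Hgrowth s Hs). lra.
Qed.

Section Reflection.

Variables a1 a2 : R -> R.
Hypothesis unit_speed : arclength_curve a1 a2.

Lemma arclength_curve_reflect : arclength_curve (reflect a1) (reflect a2).
Proof.
  intros s. destruct (curve_ex_derive a1 a2 unit_speed (- s)) as [H1 [H2 [H3 H4]]].
  assert (E : forall f, (forall t, ex_derive f t) -> ex_derive (Derive f) (- s) ->
                ex_derive (reflect f) s /\ ex_derive (Derive (reflect f)) s).
  { intros f Hf Hf2. split; [eexists; apply is_derive_reflect, Derive_correct, Hf|].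
    apply (ex_derive_ext (fun t => - reflect (Derive f) t));
      [intro t; symmetry; now apply Derive_reflect|].
    eexists. apply (is_derive_opp (reflect (Derive f))), is_derive_reflect, Derive_correct, Hf2. }
  destruct (E a1) as [E1 E1']; [apply (curve_ex_derive a1 a2 unit_speed) | exact H3 |].
  destruct (E a2) as [E2 E2']; [apply (curve_ex_derive a1 a2 unit_speed) | exact H4 |].
  repeat split; try assumption.
  rewrite !Derive_reflect by assumption. rewrite <- (curve_speed a1 a2 unit_speed (- s)). ring.
Qed.

Lemma tau_of_reflect (s : R) : tau_of (reflect a1) (reflect a2) s = - tau_of a1 a2 (- s).
Proof.
  destruct (curve_ex_derive a1 a2 unit_speed (- s)) as [H1 [H2 _]].
  unfold tau_of, dot. rewrite !Derive_reflect by assumption. unfold reflect. ring.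
Qed.

Lemma mu_of_reflect (s : R) : mu_of (reflect a1) (reflect a2) s = - mu_of a1 a2 (- s).
Proof.
  destruct (curve_ex_derive a1 a2 unit_speed (- s)) as [H1 [H2 _]].
  unfold mu_of, dot. rewrite !Derive_reflect by assumption. unfold reflect. ring.
Qed.

Lemma curv_reflect (s : R) : curv (reflect a1) (reflect a2) s = - curv a1 a2 (- s).
Proof.
  destruct (curve_ex_derive a1 a2 unit_speed (- s)) as [H1 [H2 [H3 H4]]].
  unfold curv, dot. rewrite !Derive2_reflect, !Derive_reflect by (try assumption; apply unit_speed).
  ring.
Qed.

Lemma curvature_condition_reflect (h : R) :
  (forall s, curv a1 a2 s = Kfun h (tau_of a1 a2 s) (mu_of a1 a2 s)) ->
  forall s, curv (reflect a1) (reflect a2) s =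
            Kfun h (tau_of (reflect a1) (reflect a2) s) (mu_of (reflect a1) (reflect a2) s).
Proof.
  intros Hk s. rewrite curv_reflect, tau_of_reflect, mu_of_reflect, Kfun_opp, Hk. reflexivity.
Qed.

End Reflection.

Theorem claim8 (h : R) (a1 a2 : R -> R) :
  0 < h ->
  arclength_curve a1 a2 ->
  (forall s, curv a1 a2 s = Kfun h (tau_of a1 a2 s) (mu_of a1 a2 s)) ->
  exists S0 : R, 0 < S0 /\
    (forall s, S0 < Rabs s -> (a1 s, a2 s) <> (0, 0)) /\
    (exists omega : R -> R,
        forall s, S0 < s -> continuous omega s /\ polar_angle_at a1 a2 omega s) /\
    (forall omega : R -> R,
        (forall s, S0 < s -> continuous omega s /\ polar_angle_at a1 a2 omega s) ->
        is_lim omega p_infty p_infty) /\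
    (exists omega : R -> R,
        forall s, s < - S0 -> continuous omega s /\ polar_angle_at a1 a2 omega s) /\
    (forall omega : R -> R,
        (forall s, s < - S0 -> continuous omega s /\ polar_angle_at a1 a2 omega s) ->
        is_lim omega m_infty p_infty).
Proof.
  intros Hh Hc Hk.
  destruct (curvature_condition_polar_angle_at_p_infty h a1 a2 Hh Hc Hk) as [S1 [HS1 Hfwd]].
  destruct (curvature_condition_polar_angle_at_p_infty h (reflect a1) (reflect a2) Hh
              (arclength_curve_reflect a1 a2 Hc) (curvature_condition_reflect a1 a2 Hc h Hk))
    as [S1' [HS1' Hbwd]].
  set (S0 := S1 + S1' + 1).
  destruct (Hfwd S0) as [Fnz [Fex Flim]]; [unfold S0; lra|].
  destruct (Hbwd S0) as [Bnz [[om Hom] Blim]]; [unfold S0; lra|].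
  exists S0. split; [unfold S0; lra|].
  split; [|split; [exact Fex | split; [exact Flim | split]]].
  - intros s Hs. destruct (Rle_lt_dec 0 s).
    + apply Fnz. rewrite Rabs_right in Hs; lra.
    + rewrite Rabs_left in Hs by lra. specialize (Bnz (- s) Hs).
      unfold reflect in Bnz. rewrite Ropp_involutive in Bnz. exact Bnz.
  - exists (reflect om). intros s Hs. destruct (Hom (- s) ltac:(lra)) as [C P]. split.
    + apply continuous_reflect. exact C.
    + unfold polar_angle_at, reflect in *. rewrite Ropp_involutive in P. exact P.
  - intros omega Homega. apply is_lim_m_infty_of_reflect, Blim.
    intros s Hs. destruct (Homega (- s) ltac:(lra)) as [C P].
    split; [now apply continuous_reflect | exact P].
Qed.
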